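(* The first $\varepsilon\tau$-theorem holds in $\varepsilon\tau(\mathbf{LC})$ for $\varepsilon\tau$-free formulas: if $D$ is a quantifier-free formula containing no $\varepsilon\tau$-terms and $\vdash_{\varepsilon\tau(\mathbf{LC})}D$, then $\vdash_{\mathbf{LC}}D$.
   Context: $\mathbf{LC}$ is the intermediate propositional logic axiomatized over intuitionistic propositional logic by $\mathit{Lin}$: $(A\to B)\lor(B\to A)$ (infinite-valued Gödel logic). $\varepsilon\tau$-terms: $\varepsilon x\,A(x)$, $\tau x\,A(x)$ for formulas $A(x)$. Critical formulas: $A(t)\to A(\varepsilon x\,A(x))$ and $A(\tau x\,A(x))\to A(t)$. $\vdash_{\varepsilon\tau(\mathbf{L})}B$: $B$ derivable in the quantifier-free first-order language with $\varepsilon\tau$-terms from critical formulas using substitution instances of theorems of $\mathbf{L}$ and modus ponens; $\vdash_{\mathbf{L}}$ is the same without critical formulas. *)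

From Stdlib Require Import List Arith.
Import ListNotations.
Set Implicit Arguments.

Section Syntax.
Variables (Fsym Psym : Type).

(* Terms and quantifier-free formulas.  [Eps A] stands for eps x A(x) and
   [Tau A] for tau x A(x), where the bound variable x is de Bruijn index 0 in A. *)
Inductive term : Type :=
| Var : nat -> term
| App : Fsym -> list term -> term
| Eps : formula -> term
| Tau : formula -> term
with formula : Type :=
| Atom : Psym -> list term -> formula
| FBot : formula
| FAnd : formula -> formula -> formula
| FOr  : formula -> formula -> formula
| FImp : formula -> formula -> formula.

Fixpoint lift_t (c : nat) (t : term) : term :=
  match t with
  | Var n => if n <? c then Var n else Var (S n)
  | App f ts => App f (map (lift_t c) ts)
  | Eps A => Eps (lift_f (S c) A)
  | Tau A => Tau (lift_f (S c) A)
  end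
with lift_f (c : nat) (A : formula) : formula :=
  match A with
  | Atom p ts => Atom p (map (lift_t c) ts)
  | FBot => FBot
  | FAnd B C => FAnd (lift_f c B) (lift_f c C)
  | FOr B C => FOr (lift_f c B) (lift_f c C)
  | FImp B C => FImp (lift_f c B) (lift_f c C)
  end.

Fixpoint subst_t (k : nat) (u : term) (t : term) : term :=
  match t with
  | Var n => if n <? k then Var n else if n =? k then u else Var (pred n)
  | App f ts => App f (map (subst_t k u) ts)
  | Eps A => Eps (subst_f (S k) (lift_t 0 u) A)
  | Tau A => Tau (subst_f (S k) (lift_t 0 u) A)
  end
with subst_f (k : nat) (u : term) (A : formula) : formula :=
  match A with
  | Atom p ts => Atom p (map (subst_t k u) ts)
  | FBot => FBot
  | FAnd B C => FAnd (subst_f k u B) (subst_f k u C)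
  | FOr B C => FOr (subst_f k u B) (subst_f k u C)
  | FImp B C => FImp (subst_f k u B) (subst_f k u C)
  end.

(* A(t) for A = A(x) with x the bound index 0 *)
Definition inst (A : formula) (t : term) : formula := subst_f 0 t A.

Fixpoint etfree_t (t : term) : Prop :=
  match t with
  | Var _ => True
  | App _ ts => fold_right (fun s P => etfree_t s /\ P) True ts
  | Eps _ => False
  | Tau _ => False
  end.

Fixpoint etfree_f (A : formula) : Prop :=
  match A with
  | Atom _ ts => fold_right (fun s P => etfree_t s /\ P) True ts
  | FBot => True
  | FAnd B C | FOr B C | FImp B C => etfree_f B /\ etfree_f C
  end.
End Syntax.

Arguments Var {Fsym Psym}.
Arguments FBot {Fsym Psym}.

Inductive pform : Type :=
| PVar : nat -> pform
| PBot : pform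
| PAnd : pform -> pform -> pform
| POr  : pform -> pform -> pform
| PImp : pform -> pform -> pform.

(* Theorems of LC: intuitionistic propositional logic (Hilbert system)
   plus the linearity axiom (A -> B) \/ (B -> A), closed under modus ponens. *)
Inductive LC_thm : pform -> Prop :=
| LC_K  A B : LC_thm (PImp A (PImp B A))
| LC_S  A B C : LC_thm (PImp (PImp A (PImp B C)) (PImp (PImp A B) (PImp A C)))
| LC_A1 A B : LC_thm (PImp (PAnd A B) A)
| LC_A2 A B : LC_thm (PImp (PAnd A B) B)
| LC_A3 A B : LC_thm (PImp A (PImp B (PAnd A B)))
| LC_O1 A B : LC_thm (PImp A (POr A B))
| LC_O2 A B : LC_thm (PImp B (POr A B))
| LC_O3 A B C : LC_thm (PImp (PImp A C) (PImp (PImp B C) (PImp (POr A B) C)))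
| LC_EFQ A : LC_thm (PImp PBot A)
| LC_Lin A B : LC_thm (POr (PImp A B) (PImp B A))
| LC_MP A B : LC_thm (PImp A B) -> LC_thm A -> LC_thm B.

Fixpoint psubst {F P : Type} (s : nat -> formula F P) (A : pform) : formula F P :=
  match A with
  | PVar n => s n
  | PBot => FBot
  | PAnd B C => FAnd (psubst s B) (psubst s C)
  | POr B C => FOr (psubst s B) (psubst s C)
  | PImp B C => FImp (psubst s B) (psubst s C)
  end.

Inductive prov_et {F P : Type} : formula F P -> Prop :=
| et_ax (A : pform) (s : nat -> formula F P) :
    LC_thm A -> prov_et (psubst s A)
| et_crit_eps (A : formula F P) (t : term F P) :
    prov_et (FImp (inst A t) (inst A (Eps A)))
| et_crit_tau (A : formula F P) (t : term F P) :
    prov_et (FImp (inst A (Tau A)) (inst A t))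
| et_mp (A B : formula F P) : prov_et (FImp A B) -> prov_et A -> prov_et B.

Inductive prov_LC {F P : Type} : formula F P -> Prop :=
| lc_ax (A : pform) (s : nat -> formula F P) :
    LC_thm A -> prov_LC (psubst s A)
| lc_mp (A B : formula F P) : prov_LC (FImp A B) -> prov_LC A -> prov_LC B.

(* Soundness: interpret the language over any domain with truth values in the finite Goedel
   chain {0, ..., T}, letting eps x A denote a point where A takes its largest value and
   tau x A one where it takes its smallest; both exist because the chain is finite. Then every
   critical formula and every instance of an LC-theorem takes the value T, and modus ponens
   preserves T.

   Completeness for eps-tau-free D: if LC does not prove D, extend the empty theory, one
   instance of linearity at a time, to a theory G that still does not derive D but proves
   x -> y or y -> x for all x, y in the list of bot, top and the atoms of D, and also for all
   x and x -> y with x, y in that list. Valuing each formula by the number of list elements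
   strictly below it in G-provable implication gives a Goedel valuation of the atoms under
   which every subformula of D takes the value of a G-equivalent list element, so D gets a
   value below T.

   Both valuations are read in the term model, where eps-tau-free terms denote themselves. *)

From Stdlib Require Import List Arith Lia Wf_nat Classical ClassicalEpsilon FunctionalExtensionality.
Import ListNotations.
Set Implicit Arguments.

Section TermFormulaInd.
Variables (F P : Type) (Pt : term F P -> Prop) (Pf : formula F P -> Prop).
Hypotheses
  (HVar : forall n, Pt (Var n))
  (HApp : forall f ts, Forall Pt ts -> Pt (App f ts))
  (HEps : forall A, Pf A -> Pt (Eps A))
  (HTau : forall A, Pf A -> Pt (Tau A))
  (HAtom : forall p ts, Forall Pt ts -> Pf (Atom p ts))
  (HBot : Pf FBot)
  (HAnd : forall B C, Pf B -> Pf C -> Pf (FAnd B C))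
  (HOr : forall B C, Pf B -> Pf C -> Pf (FOr B C))
  (HImp : forall B C, Pf B -> Pf C -> Pf (FImp B C)).

Fixpoint term_ind' (t : term F P) : Pt t :=
  let fix terms_ind (ts : list (term F P)) : Forall Pt ts :=
    match ts with
    | [] => Forall_nil _
    | t :: ts => Forall_cons _ (term_ind' t) (terms_ind ts)
    end in
  match t with
  | Var n => HVar n
  | App f ts => HApp f (terms_ind ts)
  | Eps A => HEps (formula_ind' A)
  | Tau A => HTau (formula_ind' A)
  end
with formula_ind' (A : formula F P) : Pf A :=
  let fix terms_ind (ts : list (term F P)) : Forall Pt ts :=
    match ts with
    | [] => Forall_nil _
    | t :: ts => Forall_cons _ (term_ind' t) (terms_ind ts)
    end in
  match A with
  | Atom p ts => HAtom p (terms_ind ts)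
  | FBot => HBot
  | FAnd B C => HAnd (formula_ind' B) (formula_ind' C)
  | FOr B C => HOr (formula_ind' B) (formula_ind' C)
  | FImp B C => HImp (formula_ind' B) (formula_ind' C)
  end.

Lemma term_formula_ind : (forall t, Pt t) /\ (forall A, Pf A).
Proof. exact (conj term_ind' formula_ind'). Qed.
End TermFormulaInd.

Lemma map_id_on {A} (f : A -> A) (Q : A -> Prop) (l : list A) :
  Forall (fun x => Q x -> f x = x) l -> fold_right (fun x R => Q x /\ R) True l -> map f l = l.
Proof. induction 1 as [|x l hx _ IH]; simpl; intros; [|f_equal]; tauto. Qed.

Lemma filter_length_mono {A} (f g : A -> bool) (l : list A) :
  (forall x, In x l -> f x = true -> g x = true) ->
  length (filter f l) <= length (filter g l).
Proof.
  induction l as [|a l IH]; simpl; intro h; [lia|].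
  assert (IH' := IH (fun x hx => h x (or_intror hx))).
  destruct (f a) eqn:ha; [rewrite (h a (or_introl eq_refl) ha); simpl; lia|].
  destruct (g a); simpl; lia.
Qed.

Lemma filter_length_mono_lt {A} (f g : A -> bool) (l : list A) (a : A) :
  (forall x, In x l -> f x = true -> g x = true) ->
  In a l -> f a = false -> g a = true ->
  length (filter f l) < length (filter g l).
Proof.
  induction l as [|b l IH]; intros h ha hfa hga; [destruct ha|]; simpl.
  destruct ha as [<- | ha].
  - rewrite hfa, hga; simpl.
    pose proof (filter_length_mono f g l (fun x hx => h x (or_intror hx))); lia.
  - assert (IH' := IH (fun x hx => h x (or_intror hx)) ha hfa hga).
    destruct (f b) eqn:hb; [rewrite (h b (or_introl eq_refl) hb); simpl; lia|].
    destruct (g b); simpl; lia.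
Qed.

Lemma filter_length_zero {A} (f : A -> bool) (l : list A) :
  (forall x, In x l -> f x = false) -> length (filter f l) = 0.
Proof.
  induction l as [|a l IH]; simpl; intro h; [reflexivity|].
  rewrite (h a (or_introl eq_refl)); exact (IH (fun x hx => h x (or_intror hx))).
Qed.

Definition goedel_imp (T a b : nat) : nat := if a <=? b then T else b.

Lemma goedel_imp_le T a b : a <= b -> goedel_imp T a b = T.
Proof. unfold goedel_imp; destruct (Nat.leb_spec a b); [reflexivity|lia]. Qed.

Lemma goedel_imp_gt T a b : b < a -> goedel_imp T a b = b.
Proof. unfold goedel_imp; destruct (Nat.leb_spec a b); [lia|reflexivity]. Qed.

Lemma goedel_imp_top_l T b : b <= T -> goedel_imp T T b = T -> b = T.
Proof. unfold goedel_imp; destruct (Nat.leb_spec T b); lia. Qed.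

Section GoedelChain.
Variable T : nat.

Fixpoint pform_value (v : nat -> nat) (A : pform) : nat :=
  match A with
  | PVar n => v n
  | PBot => 0
  | PAnd B C => min (pform_value v B) (pform_value v C)
  | POr B C => max (pform_value v B) (pform_value v C)
  | PImp B C => goedel_imp T (pform_value v B) (pform_value v C)
  end.

Variable v : nat -> nat.
Hypothesis v_le : forall n, v n <= T.

Lemma pform_value_le A : pform_value v A <= T.
Proof.
  induction A; simpl; auto; try lia.
  unfold goedel_imp; destruct (_ <=? _); lia.
Qed.

Lemma LC_thm_valid A : LC_thm A -> pform_value v A = T.
Proof.
  induction 1.
  11: { simpl in IHLC_thm1; rewrite IHLC_thm2 in IHLC_thm1.
        exact (goedel_imp_top_l (pform_value_le B) IHLC_thm1). }
  (* The axioms are tautologies of the chain: abstract the values of the subformulas and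
     split on every comparison, innermost first. *)
  all: simpl; repeat match goal with
       | |- context [pform_value v ?X] =>
           pose proof (pform_value_le X); generalize dependent (pform_value v X); intros
       end.
  all: unfold goedel_imp; repeat match goal with
       | |- context [?a <=? ?b] =>
           lazymatch a with context [_ <=? _] => fail | _ =>
           lazymatch b with context [_ <=? _] => fail | _ =>
             destruct (Nat.leb_spec a b) end end
       end; lia.
Qed.
End GoedelChain.

Section ExtremalChoice.
Variables (U : Type) (u0 : U).

Lemma ex_argmin (g : U -> nat) : exists d, forall d', g d <= g d'.
Proof.
  destruct (@dec_inh_nat_subset_has_unique_least_element (fun n => exists d, g d = n))
    as [n [[[d <-] hmin] _]].
  - intro n; apply classic.
  - exists (g u0), u0; reflexivity.
  - exists d; intro d'; apply hmin; exists d'; reflexivity.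
Qed.

Lemma ex_argmax_bounded (g : U -> nat) (T : nat) :
  (forall d, g d <= T) -> exists d, forall d', g d' <= g d.
Proof.
  intro hg; destruct (ex_argmin (fun d => T - g d)) as [d hd].
  exists d; intro d'; specialize (hd d'); pose proof (hg d); pose proof (hg d'); lia.
Qed.

Definition argmax (g : U -> nat) : U :=
  epsilon (inhabits u0) (fun d => forall d', g d' <= g d).

Definition argmin (g : U -> nat) : U :=
  epsilon (inhabits u0) (fun d => forall d', g d <= g d').

Lemma argmax_spec (g : U -> nat) (T : nat) :
  (forall d, g d <= T) -> forall d', g d' <= g (argmax g).
Proof. intro hg; exact (epsilon_spec _ _ (ex_argmax_bounded g hg)). Qed.

Lemma argmin_spec (g : U -> nat) : forall d', g (argmin g) <= g d'.
Proof. exact (epsilon_spec _ _ (ex_argmin g)). Qed.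
End ExtremalChoice.

Section GoedelSemantics.
Variables (F P U : Type) (u0 : U) (fI : F -> list U -> U) (T : nat) (pI : P -> list U -> nat).

Definition scons (d : U) (r : nat -> U) (n : nat) : U :=
  match n with 0 => d | S m => r m end.

Fixpoint eval_t (r : nat -> U) (t : term F P) : U :=
  match t with
  | Var n => r n
  | App f ts => fI f (map (eval_t r) ts)
  | Eps A => argmax u0 (fun d => eval_f (scons d r) A)
  | Tau A => argmin u0 (fun d => eval_f (scons d r) A)
  end
with eval_f (r : nat -> U) (A : formula F P) : nat :=
  match A with
  | Atom p ts => pI p (map (eval_t r) ts)
  | FBot => 0
  | FAnd B C => min (eval_f r B) (eval_f r C)
  | FOr B C => max (eval_f r B) (eval_f r C)
  | FImp B C => goedel_imp T (eval_f r B) (eval_f r C)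
  end.

Definition skip_env (c : nat) (r : nat -> U) (n : nat) : U :=
  if n <? c then r n else r (S n).

Definition ins_env (k : nat) (u : U) (r : nat -> U) (n : nat) : U :=
  if n <? k then r n else if n =? k then u else r (pred n).

Ltac nat_cases := repeat match goal with
  | |- context [?a <? ?b] => destruct (Nat.ltb_spec a b)
  | |- context [?a =? ?b] => destruct (Nat.eqb_spec a b)
  end.

Lemma skip_env_scons c d r : skip_env (S c) (scons d r) = scons d (skip_env c r).
Proof. apply functional_extensionality; intros [|n]; unfold skip_env; simpl; nat_cases; auto; lia. Qed.

Lemma ins_env_scons k u d r : ins_env (S k) u (scons d r) = scons d (ins_env k u r).
Proof.
  apply functional_extensionality; intros [|n]; unfold ins_env; simpl; nat_cases; auto; try lia.
  destruct n; [lia | reflexivity].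
Qed.

Lemma ins_env0 u r : ins_env 0 u r = scons u r.
Proof. apply functional_extensionality; intros [|n]; reflexivity. Qed.

Lemma eval_lift :
  (forall t c r, eval_t r (lift_t c t) = eval_t (skip_env c r) t) /\
  (forall A c r, eval_f r (lift_f c A) = eval_f (skip_env c r) A).
Proof.
  apply term_formula_ind; simpl.
  - intros n c r; unfold skip_env; destruct (n <? c); reflexivity.
  - intros f ts IH c r; f_equal; rewrite map_map.
    exact (map_ext_Forall _ _ (Forall_impl _ (fun t ht => ht c r) IH)).
  - intros A IH c r; f_equal; apply functional_extensionality; intro d.
    rewrite IH, skip_env_scons; reflexivity.
  - intros A IH c r; f_equal; apply functional_extensionality; intro d.
    rewrite IH, skip_env_scons; reflexivity.
  - intros p ts IH c r; f_equal; rewrite map_map.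
    exact (map_ext_Forall _ _ (Forall_impl _ (fun t ht => ht c r) IH)).
  - reflexivity.
  - intros B C IHB IHC c r; rewrite IHB, IHC; reflexivity.
  - intros B C IHB IHC c r; rewrite IHB, IHC; reflexivity.
  - intros B C IHB IHC c r; rewrite IHB, IHC; reflexivity.
Qed.

Lemma eval_subst :
  (forall t k u r, eval_t r (subst_t k u t) = eval_t (ins_env k (eval_t r u) r) t) /\
  (forall A k u r, eval_f r (subst_f k u A) = eval_f (ins_env k (eval_t r u) r) A).
Proof.
  apply term_formula_ind; simpl.
  - intros n k u r; unfold ins_env; nat_cases; reflexivity.
  - intros f ts IH k u r; f_equal; rewrite map_map.
    exact (map_ext_Forall _ _ (Forall_impl _ (fun t ht => ht k u r) IH)).
  - intros A IH k u r; f_equal; apply functional_extensionality; intro d.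
    rewrite IH, (proj1 eval_lift), ins_env_scons; reflexivity.
  - intros A IH k u r; f_equal; apply functional_extensionality; intro d.
    rewrite IH, (proj1 eval_lift), ins_env_scons; reflexivity.
  - intros p ts IH k u r; f_equal; rewrite map_map.
    exact (map_ext_Forall _ _ (Forall_impl _ (fun t ht => ht k u r) IH)).
  - reflexivity.
  - intros B C IHB IHC k u r; rewrite IHB, IHC; reflexivity.
  - intros B C IHB IHC k u r; rewrite IHB, IHC; reflexivity.
  - intros B C IHB IHC k u r; rewrite IHB, IHC; reflexivity.
Qed.

Lemma eval_inst r A t : eval_f r (inst A t) = eval_f (scons (eval_t r t) r) A.
Proof. unfold inst; rewrite (proj2 eval_subst), ins_env0; reflexivity. Qed.

Lemma eval_psubst r s A :
  eval_f r (psubst s A) = pform_value T (fun n => eval_f r (s n)) A.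
Proof. induction A; simpl; congruence. Qed.

Hypothesis pI_le : forall p us, pI p us <= T.

Lemma eval_f_le r A : eval_f r A <= T.
Proof.
  induction A; simpl; auto; try lia.
  unfold goedel_imp; destruct (_ <=? _); lia.
Qed.

Lemma prov_et_valid D : prov_et D -> forall r, eval_f r D = T.
Proof.
  induction 1 as [A s hA | A t | A t | A B _ IHAB _ IHA]; intro r.
  - rewrite eval_psubst; eapply LC_thm_valid; [intro n; apply eval_f_le | exact hA].
  - simpl; rewrite !eval_inst; apply goedel_imp_le; simpl.
    exact (argmax_spec u0 _ (fun d => eval_f_le (scons d r) A) _).
  - simpl; rewrite !eval_inst; apply goedel_imp_le; simpl.
    exact (argmin_spec u0 (fun d => eval_f (scons d r) A) _).
  - specialize (IHAB r); simpl in IHAB; rewrite IHA in IHAB.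
    exact (goedel_imp_top_l (eval_f_le r B) IHAB).
Qed.
End GoedelSemantics.

Section TermModel.
Variables (F P : Type) (T : nat) (v : P -> list (term F P) -> nat).

Fixpoint prop_value (A : formula F P) : nat :=
  match A with
  | Atom p ts => v p ts
  | FBot => 0
  | FAnd B C => min (prop_value B) (prop_value C)
  | FOr B C => max (prop_value B) (prop_value C)
  | FImp B C => goedel_imp T (prop_value B) (prop_value C)
  end.

Lemma eval_etfree :
  (forall t, etfree_t t -> eval_t (Var 0) (@App F P) T v Var t = t) /\
  (forall A, etfree_f A -> eval_f (Var 0) (@App F P) T v Var A = prop_value A).
Proof.
  apply term_formula_ind; simpl.
  - reflexivity.
  - intros f ts IH hfree; f_equal; exact (map_id_on _ _ IH hfree).
  - intros A _ [].
  - intros A _ [].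
  - intros p ts IH hfree; f_equal; exact (map_id_on _ _ IH hfree).
  - reflexivity.
  - intros B C IHB IHC [hB hC]; rewrite IHB, IHC; auto.
  - intros B C IHB IHC [hB hC]; rewrite IHB, IHC; auto.
  - intros B C IHB IHC [hB hC]; rewrite IHB, IHC; auto.
Qed.
End TermModel.

Section Derivability.
Variables (F P : Type).
Notation fm := (formula F P).

Inductive derivable (G : list fm) : fm -> Prop :=
| der_hyp A : In A G -> derivable G A
| der_thm A : prov_LC A -> derivable G A
| der_mp A B : derivable G (FImp A B) -> derivable G A -> derivable G B.
Arguments der_hyp {G A}.
Arguments der_thm {G A}.

Definition subst3 (X Y Z : fm) (n : nat) : fm :=
  match n with 0 => X | 1 => Y | _ => Z end.

Section LCInstances.
Variables (G : list fm) (X Y Z : fm).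

Lemma der_K : derivable G (FImp X (FImp Y X)).
Proof. exact (der_thm (lc_ax (subst3 X Y X) (LC_K (PVar 0) (PVar 1)))). Qed.
Lemma der_S : derivable G (FImp (FImp X (FImp Y Z)) (FImp (FImp X Y) (FImp X Z))).
Proof. exact (der_thm (lc_ax (subst3 X Y Z) (LC_S (PVar 0) (PVar 1) (PVar 2)))). Qed.
Lemma der_and_l : derivable G (FImp (FAnd X Y) X).
Proof. exact (der_thm (lc_ax (subst3 X Y X) (LC_A1 (PVar 0) (PVar 1)))). Qed.
Lemma der_and_r : derivable G (FImp (FAnd X Y) Y).
Proof. exact (der_thm (lc_ax (subst3 X Y X) (LC_A2 (PVar 0) (PVar 1)))). Qed.
Lemma der_and_intro : derivable G (FImp X (FImp Y (FAnd X Y))).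
Proof. exact (der_thm (lc_ax (subst3 X Y X) (LC_A3 (PVar 0) (PVar 1)))). Qed.
Lemma der_or_l : derivable G (FImp X (FOr X Y)).
Proof. exact (der_thm (lc_ax (subst3 X Y X) (LC_O1 (PVar 0) (PVar 1)))). Qed.
Lemma der_or_r : derivable G (FImp Y (FOr X Y)).
Proof. exact (der_thm (lc_ax (subst3 X Y X) (LC_O2 (PVar 0) (PVar 1)))). Qed.
Lemma der_or_elim : derivable G (FImp (FImp X Z) (FImp (FImp Y Z) (FImp (FOr X Y) Z))).
Proof. exact (der_thm (lc_ax (subst3 X Y Z) (LC_O3 (PVar 0) (PVar 1) (PVar 2)))). Qed.
Lemma der_efq : derivable G (FImp FBot X).
Proof. exact (der_thm (lc_ax (subst3 X X X) (LC_EFQ (PVar 0)))). Qed.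
Lemma der_lin : derivable G (FOr (FImp X Y) (FImp Y X)).
Proof. exact (der_thm (lc_ax (subst3 X Y X) (LC_Lin (PVar 0) (PVar 1)))). Qed.
End LCInstances.

Lemma der_I G X : derivable G (FImp X X).
Proof. exact (der_mp (der_mp (der_S G X (FImp X X) X) (der_K G X (FImp X X))) (der_K G X X)). Qed.

Lemma derivable_weaken G G' C : incl G G' -> derivable G C -> derivable G' C.
Proof. intros hG; induction 1; [apply der_hyp, hG | apply der_thm | eapply der_mp]; eauto. Qed.

Lemma derivable_cons G H C : derivable G C -> derivable (H :: G) C.
Proof. apply derivable_weaken, incl_tl, incl_refl. Qed.

Lemma derivable_head G H : derivable (H :: G) H.
Proof. apply der_hyp; left; reflexivity. Qed.

Lemma derivable_nil C : derivable [] C -> prov_LC C.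
Proof. induction 1; [contradiction | assumption | eapply lc_mp; eassumption]. Qed.

Lemma deduction G H C : derivable (H :: G) C -> derivable G (FImp H C).
Proof.
  induction 1 as [A [<- | hA] | A hA | A B _ IHAB _ IHA].
  - apply der_I.
  - exact (der_mp (der_K _ _ _) (der_hyp hA)).
  - exact (der_mp (der_K _ _ _) (der_thm hA)).
  - exact (der_mp (der_mp (der_S _ _ _ _) IHAB) IHA).
Qed.

Definition entails (G : list fm) (a b : fm) : Prop := derivable G (FImp a b).
Definition equivalent (G : list fm) (a b : fm) : Prop := entails G a b /\ entails G b a.
Definition Top : fm := FImp FBot FBot.

Section Entailment.
Variable G : list fm.

Lemma entails_elim a b : entails G a b -> derivable (a :: G) b.
Proof. intro h; exact (der_mp (derivable_cons _ h) (derivable_head _ _)). Qed.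

Lemma entails_refl a : entails G a a.
Proof. apply der_I. Qed.

Lemma entails_trans a b c : entails G a b -> entails G b c -> entails G a c.
Proof.
  intros hab hbc; apply deduction.
  exact (der_mp (derivable_cons _ hbc) (entails_elim hab)).
Qed.

Lemma entails_top a : entails G a Top.
Proof. exact (der_mp (der_K _ _ _) (der_efq _ _)). Qed.

Lemma entails_of_derivable a b : derivable G b -> entails G a b.
Proof. intro h; exact (der_mp (der_K _ _ _) h). Qed.

Lemma entails_and_glb a b c : entails G c a -> entails G c b -> entails G c (FAnd a b).
Proof.
  intros ha hb; apply deduction.
  exact (der_mp (der_mp (der_and_intro _ _ _) (entails_elim ha)) (entails_elim hb)).
Qed.

Lemma entails_or_lub a b c : entails G a c -> entails G b c -> entails G (FOr a b) c.
Proof. intros ha hb; exact (der_mp (der_mp (der_or_elim _ _ _ _) ha) hb). Qed.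

Lemma entails_and_mono a a' b b' :
  entails G a a' -> entails G b b' -> entails G (FAnd a b) (FAnd a' b').
Proof.
  intros ha hb; apply entails_and_glb.
  - exact (entails_trans (der_and_l _ _ _) ha).
  - exact (entails_trans (der_and_r _ _ _) hb).
Qed.

Lemma entails_or_mono a a' b b' :
  entails G a a' -> entails G b b' -> entails G (FOr a b) (FOr a' b').
Proof.
  intros ha hb; apply entails_or_lub.
  - exact (entails_trans ha (der_or_l _ _ _)).
  - exact (entails_trans hb (der_or_r _ _ _)).
Qed.

Lemma entails_imp_mono a a' b b' :
  entails G a' a -> entails G b b' -> entails G (FImp a b) (FImp a' b').
Proof.
  intros ha hb; apply deduction, deduction.
  apply (der_mp (derivable_cons _ (derivable_cons _ hb))).
  apply (der_mp (derivable_cons _ (derivable_head _ _))).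
  exact (der_mp (derivable_cons _ (derivable_cons _ ha)) (derivable_head _ _)).
Qed.

Lemma entails_imp_contract a b : entails G a (FImp a b) -> entails G a b.
Proof. intro h; apply deduction; exact (der_mp (entails_elim h) (derivable_head _ _)). Qed.

Lemma equivalent_refl a : equivalent G a a.
Proof. split; apply entails_refl. Qed.

Lemma equivalent_trans a b c : equivalent G a b -> equivalent G b c -> equivalent G a c.
Proof. intros [hab hba] [hbc hcb]; split; eapply entails_trans; eassumption. Qed.

Lemma equivalent_and a a' b b' :
  equivalent G a a' -> equivalent G b b' -> equivalent G (FAnd a b) (FAnd a' b').
Proof. intros [] []; split; apply entails_and_mono; assumption. Qed.

Lemma equivalent_or a a' b b' :
  equivalent G a a' -> equivalent G b b' -> equivalent G (FOr a b) (FOr a' b').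
Proof. intros [] []; split; apply entails_or_mono; assumption. Qed.

Lemma equivalent_imp a a' b b' :
  equivalent G a a' -> equivalent G b b' -> equivalent G (FImp a b) (FImp a' b').
Proof. intros [] []; split; apply entails_imp_mono; assumption. Qed.

Lemma equivalent_and_of_le a b : entails G a b -> equivalent G (FAnd a b) a.
Proof. intro h; split; [apply der_and_l | exact (entails_and_glb (entails_refl a) h)]. Qed.

Lemma equivalent_and_of_ge a b : entails G b a -> equivalent G (FAnd a b) b.
Proof. intro h; split; [apply der_and_r | exact (entails_and_glb h (entails_refl b))]. Qed.

Lemma equivalent_or_of_le a b : entails G a b -> equivalent G (FOr a b) b.
Proof. intro h; split; [exact (entails_or_lub h (entails_refl b)) | apply der_or_r]. Qed.

Lemma equivalent_or_of_ge a b : entails G b a -> equivalent G (FOr a b) a.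
Proof. intro h; split; [exact (entails_or_lub (entails_refl a) h) | apply der_or_l]. Qed.

Lemma equivalent_imp_top_of_le a b : entails G a b -> equivalent G (FImp a b) Top.
Proof. intro h; split; [apply entails_top | apply entails_of_derivable, h]. Qed.

Lemma equivalent_imp_of_imp_le a b : entails G (FImp a b) a -> equivalent G (FImp a b) b.
Proof.
  intro h; split; [|apply der_K].
  apply deduction; exact (der_mp (derivable_head _ _) (entails_elim h)).
Qed.
End Entailment.

Lemma linear_extension D (ps : list (fm * fm)) G0 :
  ~ derivable G0 D ->
  exists G, ~ derivable G D /\ forall x y, In (x, y) ps -> entails G x y \/ entails G y x.
Proof.
  intro hG0; induction ps as [|[x y] ps [G1 [hG1 hps]]].
  - exists G0; split; [exact hG0 | intros x y []].
  - assert (hkeep : forall z x' y', In (x', y') ps ->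
              entails (z :: G1) x' y' \/ entails (z :: G1) y' x').
    { intros z x' y' h; destruct (hps x' y' h) as [h' | h']; [left | right];
        exact (derivable_cons _ h'). }
    destruct (classic (derivable (FImp x y :: G1) D)) as [hxy | hxy].
    + exists (FImp y x :: G1); split.
      * intro hyx; apply hG1.
        exact (der_mp (der_mp (der_mp (der_or_elim _ _ _ _) (deduction hxy)) (deduction hyx))
                      (der_lin _ _ _)).
      * intros x' y' [[= <- <-] | h]; [right; apply derivable_head | exact (hkeep _ _ _ h)].
    + exists (FImp x y :: G1); split; [exact hxy |].
      intros x' y' [[= <- <-] | h]; [left; apply derivable_head | exact (hkeep _ _ _ h)].
Qed.

Fixpoint atoms (A : fm) : list fm :=
  match A with
  | Atom p ts => [Atom p ts]
  | FBot => []
  | FAnd B C | FOr B C | FImp B C => atoms B ++ atoms C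
  end.

Definition strictly_below (G : list fm) (a b : fm) : Prop := entails G a b /\ ~ entails G b a.

Definition rank (G L : list fm) (a : fm) : nat :=
  length (filter (fun b => if excluded_middle_informative (strictly_below G b a) then true else false) L).

Section Rank.
Variables (G L : list fm).

Lemma strictly_below_le_trans b a a' :
  strictly_below G b a -> entails G a a' -> strictly_below G b a'.
Proof.
  intros [hba hab] h; split.
  - exact (entails_trans hba h).
  - intro h'; exact (hab (entails_trans h h')).
Qed.

Lemma rank_mono a a' : entails G a a' -> rank G L a <= rank G L a'.
Proof.
  intro h; apply filter_length_mono; intros b _.
  do 2 destruct excluded_middle_informative; auto.
  intros _; exfalso; eauto using strictly_below_le_trans.
Qed.

Lemma rank_lt a a' : In a L -> strictly_below G a a' -> rank G L a < rank G L a'.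
Proof.
  intros ha haa'; apply (filter_length_mono_lt _ _ _ a); [| exact ha | |].
  - intros b _; do 2 destruct excluded_middle_informative; auto.
    intros _; exfalso; destruct haa'; eauto using strictly_below_le_trans.
  - destruct excluded_middle_informative as [[_ h] | _]; [exfalso; apply h, entails_refl | reflexivity].
  - destruct excluded_middle_informative; [reflexivity | contradiction].
Qed.

Lemma rank_bot : rank G L FBot = 0.
Proof.
  apply filter_length_zero; intros b _.
  destruct excluded_middle_informative as [[_ h] | _]; [exfalso; apply h, der_efq | reflexivity].
Qed.
End Rank.

Section Representative.
Variables (G L : list fm).
Hypothesis lin : forall x y, In x L -> In y L -> entails G x y \/ entails G y x.
(* Since x -> y has value y when y < x, this instance of linearity is what makes
   x -> y and y provably equivalent in that case. *)
Hypothesis lin_imp :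
  forall x y, In x L -> In y L -> entails G x (FImp x y) \/ entails G (FImp x y) x.
Hypotheses (bot_in : In FBot L) (top_in : In Top L).

Lemma ex_representative C :
  incl (atoms C) L ->
  exists e, In e L /\ equivalent G C e /\
    prop_value (rank G L Top) (fun p ts => rank G L (Atom p ts)) C = rank G L e.
Proof.
  induction C as [p ts | | C1 IH1 C2 IH2 | C1 IH1 C2 IH2 | C1 IH1 C2 IH2]; simpl; intro hat.
  { exists (Atom p ts); split; [apply hat; left; reflexivity | split; [apply equivalent_refl | reflexivity]]. }
  { exists FBot; split; [exact bot_in | split; [apply equivalent_refl | symmetry; apply rank_bot]]. }
  all: destruct (incl_app_inv _ _ hat) as [hat1 hat2].
  all: destruct (IH1 hat1) as [e1 [he1 [eq1 ->]]]; destruct (IH2 hat2) as [e2 [he2 [eq2 ->]]].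
  - destruct (lin _ _ he1 he2) as [h | h]; pose proof (rank_mono L h).
    + exists e1; split; [exact he1 | split; [|lia]].
      exact (equivalent_trans (equivalent_and eq1 eq2) (equivalent_and_of_le h)).
    + exists e2; split; [exact he2 | split; [|lia]].
      exact (equivalent_trans (equivalent_and eq1 eq2) (equivalent_and_of_ge h)).
  - destruct (lin _ _ he1 he2) as [h | h]; pose proof (rank_mono L h).
    + exists e2; split; [exact he2 | split; [|lia]].
      exact (equivalent_trans (equivalent_or eq1 eq2) (equivalent_or_of_le h)).
    + exists e1; split; [exact he1 | split; [|lia]].
      exact (equivalent_trans (equivalent_or eq1 eq2) (equivalent_or_of_ge h)).
  - destruct (classic (entails G e1 e2)) as [h | h].
    + exists Top; split; [exact top_in | split].
      * exact (equivalent_trans (equivalent_imp eq1 eq2) (equivalent_imp_top_of_le h)).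
      * exact (goedel_imp_le _ (rank_mono L h)).
    + assert (h21 : strictly_below G e2 e1) by (split; [destruct (lin _ _ he1 he2) |]; tauto).
      destruct (lin_imp _ _ he1 he2) as [k | k]; [exfalso; exact (h (entails_imp_contract k)) |].
      exists e2; split; [exact he2 | split].
      * exact (equivalent_trans (equivalent_imp eq1 eq2) (equivalent_imp_of_imp_le k)).
      * exact (goedel_imp_gt _ (rank_lt L he2 h21)).
Qed.
End Representative.
End Derivability.

Arguments Top {F P}.

Theorem LC_countermodel (F P : Type) (D : formula F P) :
  ~ prov_LC D ->
  exists T (v : P -> list (term F P) -> nat), (forall p ts, v p ts <= T) /\ prop_value T v D < T.
Proof.
  intro hD.
  set (L := FBot :: Top :: atoms D).
  set (K := L ++ map (fun xy => FImp (fst xy) (snd xy)) (list_prod L L)).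
  destruct (linear_extension (D := D) (list_prod K K) (G0 := [])) as [G [hG hlin]].
  { intro h; exact (hD (derivable_nil h)). }
  assert (lin : forall x y, In x K -> In y K -> entails G x y \/ entails G y x)
    by (intros; apply hlin, in_prod; assumption).
  assert (hLK : incl L K) by (apply incl_appl, incl_refl).
  assert (hImpK : forall x y, In x L -> In y L -> In (FImp x y) K).
  { intros x y hx hy; apply in_or_app; right.
    exact (in_map (fun xy => FImp (fst xy) (snd xy)) _ (x, y) (in_prod _ _ _ _ hx hy)). }
  destruct (@ex_representative F P G L) with (C := D) as [e [he [[_ heD] hval]]].
  - intros x y hx hy; exact (lin _ _ (hLK _ hx) (hLK _ hy)).
  - intros x y hx hy; exact (lin _ _ (hLK _ hx) (hImpK _ _ hx hy)).
  - left; reflexivity.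
  - right; left; reflexivity.
  - intros x hx; right; right; exact hx.
  - exists (rank G L Top), (fun p ts => rank G L (Atom p ts)); split.
    + intros p ts; apply rank_mono, entails_top.
    + rewrite hval; apply (rank_lt L he); split; [apply entails_top |].
      intro htop; apply hG; exact (der_mp heD (der_mp htop (der_efq _ _))).
Qed.

Theorem mainTheorem5 (Fsym Psym : Type) (D : formula Fsym Psym) :
  etfree_f D -> prov_et D -> prov_LC D.
Proof.
  intros hfree hprov; apply NNPP; intro hD.
  destruct (LC_countermodel hD) as [T [v [hv hlt]]].
  pose proof (prov_et_valid (Var 0) (@App Fsym Psym) v hv hprov Var) as hvalid.
  rewrite (proj2 (eval_etfree T v) D hfree) in hvalid.
  lia.
Qed.
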